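(* Let $n\ge1$ and let $\boldsymbol{\theta}\mapsto\ket{\phi(\boldsymbol{\theta})}$, $\boldsymbol{\theta}\in\mathbb{R}^m$, be any smooth map into normalized pure states of $n$ qubits. Let $\nu$ be a unitary 2-design on $U(2^n)$. For $U\in U(2^n)$ and $\boldsymbol{s}\in\{0,1\}^n$ let $p_{\boldsymbol{s}}^U(\boldsymbol{\theta}) := \bra{\phi(\boldsymbol{\theta})}U^\dagger\Pi_{\boldsymbol{s}}U\ket{\phi(\boldsymbol{\theta})}$ with $\Pi_{\boldsymbol{s}}=\ket{\boldsymbol{s}}\bra{\boldsymbol{s}}$. Then for all $\boldsymbol{\theta}$ and all $i,j$, $$[\mathcal{F}_Q(\boldsymbol{\theta})]_{ij} = 2(2^n+1)\sum_{\boldsymbol{s}\in\{0,1\}^n}\mathbb{E}_{U\sim\nu}\left[\frac{\partial p_{\boldsymbol{s}}^U(\boldsymbol{\theta})}{\partial\theta_i}\frac{\partial p_{\boldsymbol{s}}^U(\boldsymbol{\theta})}{\partial\theta_j}\right].$$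
   Context: The quantum Fisher information matrix is the $m\times m$ real matrix with entries $$[\mathcal{F}_Q(\boldsymbol{\theta})]_{ij} = 4\,\mathrm{Re}\left[\frac{\partial\bra{\phi(\boldsymbol{\theta})}}{\partial\theta_i}\frac{\partial\ket{\phi(\boldsymbol{\theta})}}{\partial\theta_j} - \frac{\partial\bra{\phi(\boldsymbol{\theta})}}{\partial\theta_i}\ket{\phi(\boldsymbol{\theta})}\bra{\phi(\boldsymbol{\theta})}\frac{\partial\ket{\phi(\boldsymbol{\theta})}}{\partial\theta_j}\right].$$ A probability distribution $\nu$ supported on a set of unitaries $S\subseteq U(d)$ is a unitary $k$-design if $\mathbb{E}_{V\sim\nu}[V^{\otimes k}OV^{\dagger\otimes k}] = \mathbb{E}_{U\sim\mu_H}[U^{\otimes k}OU^{\dagger\otimes k}]$ for all operators $O$ on $(\mathbb{C}^d)^{\otimes k}$, where $\mu_H$ is the Haar probability measure on $U(d)$; here $d=2^n$, $k=2$. *)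

From HB Require Import structures.
From mathcomp Require Import all_boot all_order all_algebra.
From mathcomp Require Import all_classical all_reals all_analysis.
From mathcomp Require Import complex.
From mathcomp Require mxtens.
Set Implicit Arguments. Unset Strict Implicit. Unset Printing Implicit Defensive.
Import Order.TTheory GRing.Theory Num.Theory.
Import numFieldNormedType.Exports.
Local Open Scope classical_set_scope.
Local Open Scope ring_scope.

Section QFI.
Variable R : realType.
Local Notation C := R[i].

Definition adj {p q : nat} (A : 'M[C]_(p, q)) : 'M[C]_(q, p) :=
  (map_mx Num.conj A)^T.

Definition is_unitary {D : nat} (U : 'M[C]_D) : Prop :=
  U *m adj U = 1%:M.

Fixpoint iterD {m : nat} (f : 'rV[R]_m -> R) (vs : seq 'rV[R]_m)
  : 'rV[R]_m -> R :=
  match vs with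
  | [::] => f
  | v :: vs' => 'D_v (iterD f vs')
  end.

Definition smooth_fun {m : nat} (f : 'rV[R]_m -> R) : Prop :=
  forall (vs : seq 'rV[R]_m) (x : 'rV[R]_m), differentiable (iterD f vs) x.

Definition pd {m : nat} (i : 'I_m) (f : 'rV[R]_m -> R) (x : 'rV[R]_m) : R :=
  'D_(delta_mx 0 i) f x.

Definition smooth_state {m D : nat} (phi : 'rV[R]_m -> 'cV[C]_D) : Prop :=
  forall k : 'I_D, smooth_fun (fun t => complex.Re (phi t k 0)) /\
                   smooth_fun (fun t => complex.Im (phi t k 0)).

Definition dstate {m D : nat} (i : 'I_m) (phi : 'rV[R]_m -> 'cV[C]_D)
  (x : 'rV[R]_m) : 'cV[C]_D :=
  \col_k (Complex (pd i (fun t => complex.Re (phi t k 0)) x)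
                  (pd i (fun t => complex.Im (phi t k 0)) x)).

Definition QFI {m D : nat} (phi : 'rV[R]_m -> 'cV[C]_D) (x : 'rV[R]_m)
  (i j : 'I_m) : R :=
  4 * complex.Re ((adj (dstate i phi x) *m dstate j phi x) 0 0
          - (adj (dstate i phi x) *m phi x *m adj (phi x)
               *m dstate j phi x) 0 0).

Definition pU {m D : nat} (s : 'I_D) (U : 'M[C]_D)
  (phi : 'rV[R]_m -> 'cV[C]_D) (x : 'rV[R]_m) : R :=
  complex.Re ((adj (phi x) *m adj U *m delta_mx s s *m U *m phi x) 0 0).

Definition CE {d} {T : measurableType d} (P : probability T R) (f : T -> C)
  : C :=
  Complex (\int[P]_w complex.Re (f w)) (\int[P]_w complex.Im (f w)).

(* a random unitary: a unitary-valued map on a probability space whose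
   entries are measurable; its law is a probability distribution on U(D) *)
Definition random_unitary {d} {T : measurableType d} {D : nat}
  (U : T -> 'M[C]_D) : Prop :=
  (forall w, is_unitary (U w)) /\
  (forall a b : 'I_D, measurable_fun setT (fun w => complex.Re (U w a b)) /\
                      measurable_fun setT (fun w => complex.Im (U w a b))).

Definition splitRI {D : nat} (M : 'M[C]_D) : 'M[R]_D * 'M[R]_D :=
  (map_mx (@complex.Re R) M, map_mx (@complex.Im R) M).

(* H is Haar-distributed: a random unitary whose law is left-invariant,
   i.e. V H and H have the same law for every unitary V (equality of laws
   tested against continuous functions on the matrix space) *)
Definition is_haar {d} {T : measurableType d} (P : probability T R)
  {D : nat} (H : T -> 'M[C]_D) : Prop :=
  random_unitary H /\
  forall V : 'M[C]_D, is_unitary V ->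
  forall g : 'M[R]_D * 'M[R]_D -> R, continuous g ->
    \int[P]_w g (splitRI (V *m H w)) = \int[P]_w g (splitRI (H w)).

Definition twirl2 {D : nat} (U : 'M[C]_D) (O : 'M[C]_(D * D)) : 'M[C]_(D * D) :=
  mxtens.tensmx U U *m O *m adj (mxtens.tensmx U U).

Definition is_2design {d} {T : measurableType d} (P : probability T R)
  {D : nat} (U : T -> 'M[C]_D) : Prop :=
  random_unitary U /\
  exists (d' : measure_display) (T' : measurableType d')
         (P' : probability T' R) (H : T' -> 'M[C]_D),
    is_haar P' H /\
    forall (O : 'M[C]_(D * D)) (a b : 'I_(D * D)),
      CE P (fun w => twirl2 (U w) O a b) = CE P' (fun w => twirl2 (H w) O a b).

End QFI.

(* Differentiating p_s^U gives d_i p_s^U = 2 Re (conj <s|U psi> <s|U d_i psi>),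
   so d_i p_s^U d_j p_s^U is the real part of the diagonal entry (ss, ss) of
   (U (x) U) O (U (x) U)^dagger for an operator O on two copies built from
   psi, d_i psi and d_j psi; a 2-design therefore averages it as the Haar
   measure does.  The Haar average M of (H (x) H) O (H (x) H)^dagger is
   invariant under conjugation by V (x) V for every unitary V.  Testing this
   invariance with diagonal phases, a transposition and a real rotation in a
   coordinate plane gives M_(kk,kk) = M_(kl,kl) + M_(kl,lk) for k <> l, hence
   (D + 1) sum_s M_(ss,ss) = tr M + tr (M SWAP) = tr O + tr (O SWAP).  These two
   traces are computed from <psi|psi> = 1 and Re <psi|d psi> = 0, and give the
   quantum Fisher information. *)

From Pilot Require Import Defs.
From HB Require Import structures.
From mathcomp Require Import all_boot all_order all_algebra.
From mathcomp Require Import all_classical all_reals all_analysis.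
From mathcomp Require Import complex.
From mathcomp Require mxtens.
From mathcomp Require Import ring lra.
From mathcomp Require Import perm.
Import Order.TTheory GRing.Theory Num.Theory.
Import numFieldNormedType.Exports.
Local Open Scope classical_set_scope.
Local Open Scope ring_scope.

Set Implicit Arguments. Unset Strict Implicit. Unset Printing Implicit Defensive.

Local Notation tensmx := mxtens.tensmx.
Local Notation ix a b := (mxtens.mxtens_index (a, b)).

Section ComplexParts.
Variable R : rcfType.
Local Notation C := R[i].
Local Notation Re := (@complex.Re R).
Local Notation Im := (@complex.Im R).

Lemma complexP (x y : C) : Re x = Re y -> Im x = Im y -> x = y.
Proof. by case: x => a b; case: y => c e /= -> ->. Qed.

Lemma cReD (x y : C) : Re (x + y) = Re x + Re y.
Proof. by case: x => a b; case: y. Qed.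
Lemma cImD (x y : C) : Im (x + y) = Im x + Im y.
Proof. by case: x => a b; case: y. Qed.
Lemma cReN (x : C) : Re (- x) = - Re x.
Proof. by case: x. Qed.
Lemma cReM (x y : C) : Re (x * y) = Re x * Re y - Im x * Im y.
Proof. by case: x => a b; case: y. Qed.
Lemma cImM (x y : C) : Im (x * y) = Re x * Im y + Im x * Re y.
Proof. by case: x => a b; case: y. Qed.
Lemma cReJ (x : C) : Re (Num.conj x) = Re x.
Proof. by case: x. Qed.
Lemma cImJ (x : C) : Im (Num.conj x) = - Im x.
Proof. by case: x. Qed.

Lemma cRe_sum I (r : seq I) (P : pred I) (F : I -> C) :
  Re (\sum_(i <- r | P i) F i) = \sum_(i <- r | P i) Re (F i).
Proof. exact: (big_morph _ cReD). Qed.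
Lemma cRe_natr n : Re n%:R = n%:R.
Proof. by elim: n => // n IH; rewrite !mulrSr cReD IH. Qed.
Lemma cIm_natr n : Im n%:R = 0.
Proof. by elim: n => // n IH; rewrite !mulrSr cImD IH addr0. Qed.

Lemma cRe_natrM n (x : C) : Re (n%:R * x) = n%:R * Re x.
Proof. by rewrite cReM cRe_natr cIm_natr mul0r subr0. Qed.

End ComplexParts.

Section SumSupport.
Variables (K : pzSemiRingType) (n : nat).

Lemma sum_supp1 (a : 'I_n) (g F : 'I_n -> K) :
  (forall p, p != a -> g p = 0) -> \sum_p g p * F p = g a * F a.
Proof.
move=> g0; rewrite (bigD1 a) //= big1 ?addr0 // => p pa.
by rewrite g0 ?mul0r.
Qed.

Lemma sum_supp2 (k l : 'I_n) (g F : 'I_n -> K) : k != l ->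
  (forall p, p != k -> p != l -> g p = 0) ->
  \sum_p g p * F p = g k * F k + g l * F l.
Proof.
move=> kl g0; rewrite (bigD1 k) //= (bigD1 l) 1?eq_sym //= big1 ?addr0 // => p.
by case/andP=> pl pk; rewrite g0 ?mul0r.
Qed.

Lemma sum_deltal (a : 'I_n) (F : 'I_n -> K) : \sum_p (a == p)%:R * F p = F a.
Proof.
by rewrite (@sum_supp1 a) ?eqxx ?mul1r // => p; rewrite eq_sym => /negbTE ->.
Qed.

Lemma sum_deltar (a : 'I_n) (F : 'I_n -> K) : \sum_p (p == a)%:R * F p = F a.
Proof. by rewrite (@sum_supp1 a) ?eqxx ?mul1r // => p /negbTE ->. Qed.

End SumSupport.

Lemma big_tens_index (V : nmodType) m n (F : 'I_(m * n) -> V) :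
  \sum_x F x = \sum_(i < m) \sum_(j < n) F (ix i j).
Proof.
rewrite pair_big /= (reindex (@mxtens.mxtens_index m n)) /=; last first.
  by exists (@mxtens.mxtens_unindex m n) => x _;
    [apply: mxtens.mxtens_indexK | apply: mxtens.mxtens_unindexK].
by apply: eq_bigr => -[i j] _.
Qed.

Section Adjoint.
Variable R : realType.
Local Notation C := R[i].

Lemma adjE p q (A : 'M[C]_(p, q)) i j : adj A i j = Num.conj (A j i).
Proof. by rewrite !mxE. Qed.

Lemma adjM p q r (A : 'M[C]_(p, q)) (B : 'M[C]_(q, r)) :
  adj (A *m B) = adj B *m adj A.
Proof.
apply/matrixP => i j; rewrite !mxE rmorph_sum; apply: eq_bigr => k _.
by rewrite !mxE rmorphM mulrC.
Qed.

Lemma adjK p q (A : 'M[C]_(p, q)) : adj (adj A) = A.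
Proof. by apply/matrixP => i j; rewrite !mxE conjCK. Qed.

Lemma adj_tensmx m n p q (A : 'M[C]_(m, n)) (B : 'M[C]_(p, q)) :
  adj (tensmx A B) = tensmx (adj A) (adj B).
Proof. by apply/matrixP => i j; rewrite !mxE rmorphM. Qed.

Lemma tensmx11 m n : tensmx (1%:M : 'M[C]_m) (1%:M : 'M[C]_n) = 1%:M.
Proof.
apply/matrixP => x y.
case: (mxtens.mxtens_indexP x) => i j; case: (mxtens.mxtens_indexP y) => k l.
rewrite mxtens.tensmxE !mxE (inj_eq (can_inj (@mxtens.mxtens_indexK m n))) xpair_eqE.
by case: (i == k); case: (j == l); rewrite /= ?mulr1 ?mulr0 ?mul0r.
Qed.

Lemma adj_dot n (x y : 'cV[C]_n) : (adj x *m y) 0 0 = Num.conj ((adj y *m x) 0 0).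
Proof. by rewrite -adjE adjM adjK. Qed.

Lemma unitaryV D (U : 'M[C]_D) : Defs.is_unitary U -> adj U *m U = 1%:M.
Proof. by move=> hU; apply: mulmx1C. Qed.

Lemma tensmx_unitaryV D (U : 'M[C]_D) : Defs.is_unitary U ->
  adj (tensmx U U) *m tensmx U U = 1%:M.
Proof. by move=> hU; rewrite adj_tensmx mxtens.tensmx_mul unitaryV // tensmx11. Qed.

Lemma twirl2_mulmx D (V A : 'M[C]_D) O :
  twirl2 (V *m A) O = tensmx V V *m twirl2 A O *m adj (tensmx V V).
Proof. by rewrite /twirl2 -mxtens.tensmx_mul adjM !mulmxA. Qed.

Lemma twirl2E D (V : 'M[C]_D) (M : 'M[C]_(D * D)) a b c e :
  twirl2 V M (ix a b) (ix c e) =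
  \sum_p V a p * \sum_q V b q * \sum_r Num.conj (V c r) *
     \sum_t Num.conj (V e t) * M (ix p q) (ix r t).
Proof.
transitivity (\sum_r \sum_t \sum_p \sum_q
   (V a p * (V b q * (Num.conj (V c r) * (Num.conj (V e t) * M (ix p q) (ix r t)))))).
  rewrite mxE big_tens_index; apply: eq_bigr => r _; apply: eq_bigr => t _.
  rewrite mxE big_tens_index mulr_suml; apply: eq_bigr => p _.
  rewrite mulr_suml; apply: eq_bigr => q _.
  by rewrite adjE !mxtens.tensmxE rmorphM; ring.
under eq_bigr do rewrite exchange_big; rewrite exchange_big.
apply: eq_bigr => p _; rewrite mulr_sumr.
under eq_bigr do rewrite exchange_big; rewrite exchange_big.
apply: eq_bigr => q _; rewrite !mulr_sumr.
by apply: eq_bigr => r _; rewrite !mulr_sumr.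
Qed.

End Adjoint.

Section Swap.
Variable K : comPzRingType.

Definition swapmx n : 'M[K]_(n * n) :=
  \matrix_(x, y) (((mxtens.mxtens_unindex x).1 == (mxtens.mxtens_unindex y).2) &&
                  ((mxtens.mxtens_unindex x).2 == (mxtens.mxtens_unindex y).1))%:R.

Lemma swapmxE n (a b c e : 'I_n) :
  swapmx n (ix a b) (ix c e) = ((a == e) && (b == c))%:R.
Proof. by rewrite mxE !mxtens.mxtens_indexK. Qed.

Lemma mxtrace_tensE m n (X : 'M[K]_(m * n)) :
  \tr X = \sum_k \sum_l X (ix k l) (ix k l).
Proof. exact: big_tens_index. Qed.

Lemma mxtrace_mul_swapmx n (X : 'M[K]_(n * n)) :
  \tr (X *m swapmx n) = \sum_k \sum_l X (ix k l) (ix l k).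
Proof.
rewrite mxtrace_tensE; apply: eq_bigr => a _; apply: eq_bigr => b _.
rewrite mxE big_tens_index.
transitivity (\sum_c (c == b)%:R * \sum_e (e == a)%:R * X (ix a b) (ix c e)).
  apply: eq_bigr => c _; rewrite mulr_sumr; apply: eq_bigr => e _.
  by rewrite swapmxE -mulnb natrM; ring.
by rewrite !sum_deltar.
Qed.

Lemma mxtrace_tensmx m n (X : 'M[K]_m) (Y : 'M[K]_n) :
  \tr (tensmx X Y) = \tr X * \tr Y.
Proof.
rewrite mxtrace_tensE /mxtrace mulr_suml; apply: eq_bigr => a _.
by rewrite mulr_sumr; apply: eq_bigr => b _; rewrite mxtens.tensmxE.
Qed.

Lemma mxtrace_tensmx_swapmx n (X Y : 'M[K]_n) :
  \tr (tensmx X Y *m swapmx n) = \tr (X *m Y).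
Proof.
rewrite mxtrace_mul_swapmx /mxtrace; apply: eq_bigr => a _.
by rewrite mxE; apply: eq_bigr => b _; rewrite mxtens.tensmxE.
Qed.

Lemma swapmx_tensmxC n (A : 'M[K]_n) :
  swapmx n *m tensmx A A = tensmx A A *m swapmx n.
Proof.
apply/matrixP => x y.
case: (mxtens.mxtens_indexP x) => a b; case: (mxtens.mxtens_indexP y) => c e.
rewrite !mxE !big_tens_index.
transitivity (\sum_p (b == p)%:R * \sum_q (a == q)%:R * (A p c * A q e)).
  apply: eq_bigr => p _; rewrite mulr_sumr; apply: eq_bigr => q _.
  by rewrite swapmxE mxtens.tensmxE -mulnb natrM; ring.
transitivity (\sum_p (p == e)%:R * \sum_q (q == c)%:R * (A a p * A b q)); last first.
  apply: eq_bigr => p _; rewrite mulr_sumr; apply: eq_bigr => q _.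
  by rewrite swapmxE mxtens.tensmxE -mulnb natrM; ring.
by rewrite !sum_deltal !sum_deltar mulrC.
Qed.

End Swap.

Section TwirlTraces.
Variables (R : realType) (D : nat).
Local Notation C := R[i].

Lemma mxtrace_twirl2 (U : 'M[C]_D) O :
  Defs.is_unitary U -> \tr (twirl2 U O) = \tr O.
Proof. by move=> hU; rewrite mxtrace_mulC mulmxA tensmx_unitaryV // mul1mx. Qed.

Lemma mxtrace_twirl2_swapmx (U : 'M[C]_D) O : Defs.is_unitary U ->
  \tr (twirl2 U O *m swapmx C D) = \tr (O *m swapmx C D).
Proof.
move=> hU; rewrite /twirl2 -!mulmxA adj_tensmx -swapmx_tensmxC -adj_tensmx.
by rewrite mxtrace_mulC -!mulmxA tensmx_unitaryV // mulmx1.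
Qed.

End TwirlTraces.

Section InvariantTensor.
Variables (R : realType) (D : nat).
Local Notation C := R[i].
Local Notation Re := (@complex.Re R).

Definition monomx (s : 'I_D -> 'I_D) (e : 'I_D -> C) : 'M[C]_D :=
  \matrix_(a, p) ((p == s a)%:R * e a).

Lemma monomx_unitary (s : 'I_D -> 'I_D) e : injective s ->
  (forall a, e a * Num.conj (e a) = 1) -> Defs.is_unitary (monomx s e).
Proof.
move=> s_inj e_unit; apply/matrixP => a b; rewrite !mxE.
rewrite (@sum_supp1 _ _ (s a)); last by move=> p pa; rewrite mxE (negbTE pa) mul0r.
rewrite !mxE eqxx mul1r (inj_eq s_inj) rmorphM /=.
by case: (a =P b) => [<-|_]; rewrite /= ?rmorph1 ?rmorph0 ?mul1r ?mul0r ?mulr0.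
Qed.

Variable M : 'M[C]_(D * D).
Hypothesis M_inv : forall V, Defs.is_unitary V -> twirl2 V M = M.

Lemma invariant_monomx (s : 'I_D -> 'I_D) e : injective s ->
  (forall a, e a * Num.conj (e a) = 1) -> forall a b c d,
  M (ix a b) (ix c d) =
  e a * e b * Num.conj (e c) * Num.conj (e d) * M (ix (s a) (s b)) (ix (s c) (s d)).
Proof.
move=> s_inj e_unit a b c d.
rewrite -{1}(M_inv (monomx_unitary s_inj e_unit)) twirl2E.
have V0 x p : p != s x -> monomx s e x p = 0.
  by move=> /negbTE ps; rewrite mxE ps mul0r.
have V0J x p : p != s x -> Num.conj (monomx s e x p) = 0.
  by move=> /V0 ->; rewrite rmorph0.
rewrite (@sum_supp1 _ _ (s a)); last exact: V0.
rewrite (@sum_supp1 _ _ (s b)); last exact: V0.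
rewrite (@sum_supp1 _ _ (s c) (fun r => Num.conj (monomx s e c r))); last exact: V0J.
rewrite (@sum_supp1 _ _ (s d) (fun r => Num.conj (monomx s e d r))); last exact: V0J.
by rewrite !mxE !eqxx !mul1r; ring.
Qed.

Section TwoIndices.
Variables k l : 'I_D.
Hypothesis neq_kl : k != l.

Definition phase_at_k (a : 'I_D) : C := if a == k then 'i%C else 1.

Lemma invariant_phase_eq0 a b c d :
  Re (phase_at_k a * phase_at_k b * Num.conj (phase_at_k c) * Num.conj (phase_at_k d))
    != 1 ->
  M (ix a b) (ix c d) = 0.
Proof.
set z := _ * _ * _ * _ => z_neq1.
have phase_unit x : phase_at_k x * Num.conj (phase_at_k x) = 1.
  rewrite /phase_at_k; case: (x == k); last by rewrite rmorph1 mulr1.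
  by apply: complexP; rewrite ?(cReM, cImM, cReJ, cImJ) /=; lra.
have /eqP := invariant_monomx (@inj_id _) phase_unit a b c d.
rewrite -/z -subr_eq0 -{1}[M _ _]mul1r -mulrBl mulf_eq0 subr_eq0.
by case/orP=> [/eqP z1|/eqP //]; rewrite -z1 eqxx in z_neq1.
Qed.

Lemma invariant_tperm a b c d : M (ix a b) (ix c d) =
  M (ix (tperm k l a) (tperm k l b)) (ix (tperm k l c) (tperm k l d)).
Proof.
rewrite (@invariant_monomx _ (fun _ => 1) (@perm_inj _ (tperm k l))).
  by rewrite rmorph1 !mul1r.
by move=> _; rewrite rmorph1 mulr1.
Qed.

(* (3/5, 4/5) is a rational point of the unit circle, so [rotmx] is orthogonal
   without square roots. *)
Definition alpha : C := 3%:R / 5%:R.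
Definition beta : C := 4%:R / 5%:R.

Definition rotmx : 'M[C]_D := \matrix_(a, p)
  (if a == k then (if p == k then alpha else if p == l then beta else 0)
   else if a == l then (if p == k then beta else if p == l then - alpha else 0)
   else (p == a)%:R).

Lemma rotmx_kk : rotmx k k = alpha. Proof. by rewrite mxE !eqxx. Qed.
Lemma rotmx_kl : rotmx k l = beta.
Proof. by rewrite mxE eqxx eq_sym (negbTE neq_kl) eqxx. Qed.
Lemma rotmx_lk : rotmx l k = beta.
Proof. by rewrite mxE eq_sym (negbTE neq_kl) !eqxx. Qed.
Lemma rotmx_ll : rotmx l l = - alpha.
Proof. by rewrite mxE eq_sym (negbTE neq_kl) !eqxx. Qed.
Lemma rotmx_k0 p : p != k -> p != l -> rotmx k p = 0.
Proof. by move=> /negbTE pk /negbTE pl; rewrite mxE eqxx pk pl. Qed.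
Lemma rotmx_l0 p : p != k -> p != l -> rotmx l p = 0.
Proof. by move=> /negbTE pk /negbTE pl; rewrite mxE eq_sym (negbTE neq_kl) eqxx pk pl. Qed.
Lemma rotmx_id a p : a != k -> a != l -> rotmx a p = (p == a)%:R.
Proof. by move=> /negbTE ak /negbTE al; rewrite mxE ak al. Qed.

Lemma rotmx_conj a p : Num.conj (rotmx a p) = rotmx a p.
Proof.
rewrite mxE /alpha /beta; repeat case: ifP => _;
  by rewrite ?rmorph0 ?rmorphN ?fmorph_div ?rmorph_nat.
Qed.

Lemma rotmx_unitary : Defs.is_unitary rotmx.
Proof.
apply/matrixP => a b; rewrite !mxE.
under eq_bigr do rewrite adjE rotmx_conj.
have [->|ak] := eqVneq a k.
  rewrite (@sum_supp2 _ _ _ _ (fun p => rotmx k p) _ neq_kl); last exact: rotmx_k0.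
  rewrite rotmx_kk rotmx_kl.
  have [->|bk] := eqVneq b k.
    by rewrite rotmx_kk rotmx_kl /alpha /beta /=; field.
  have [->|bl] := eqVneq b l.
    by rewrite rotmx_lk rotmx_ll /=; ring.
  by rewrite !rotmx_id // ?(eq_sym k b) ?(eq_sym l b) (negbTE bk) (negbTE bl) /=; ring.
have [->|al] := eqVneq a l.
  rewrite (@sum_supp2 _ _ _ _ (fun p => rotmx l p) _ neq_kl); last exact: rotmx_l0.
  rewrite rotmx_lk rotmx_ll.
  have [->|bk] := eqVneq b k.
    by rewrite rotmx_kk rotmx_kl eq_sym (negbTE neq_kl) /=; ring.
  have [->|bl] := eqVneq b l.
    by rewrite rotmx_lk rotmx_ll /alpha /beta /=; field.
  by rewrite !rotmx_id // ?(eq_sym k b) ?(eq_sym l b) (negbTE bk) (negbTE bl) /=; ring.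
rewrite (@sum_supp1 _ _ a (fun p => rotmx a p)); last first.
  by move=> p pa; rewrite rotmx_id // (negbTE pa).
rewrite [rotmx a a]rotmx_id // eqxx mul1r.
have [->|bk] := eqVneq b k; first by rewrite rotmx_k0 // (negbTE ak).
have [->|bl] := eqVneq b l; first by rewrite rotmx_l0 // (negbTE al).
by rewrite rotmx_id.
Qed.

Lemma rotmx_row_k (F : 'I_D -> C) :
  \sum_p rotmx k p * F p = alpha * F k + beta * F l.
Proof.
rewrite (@sum_supp2 _ _ _ _ (fun p => rotmx k p) F neq_kl) ?rotmx_kk ?rotmx_kl //.
exact: rotmx_k0.
Qed.

Lemma rotmx_row_kJ (F : 'I_D -> C) :
  \sum_p Num.conj (rotmx k p) * F p = alpha * F k + beta * F l.
Proof. by under eq_bigr do rewrite rotmx_conj; exact: rotmx_row_k. Qed.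

Ltac phase_neq1 := apply: invariant_phase_eq0;
  rewrite /phase_at_k !eqxx [l == k]eq_sym (negbTE neq_kl) ?(cReM, cImM, cReJ, cImJ) /=;
  apply/eqP; lra.

(* Invariance under [rotmx] at the entry (kk, kk) only involves indices in
   {k, l}: the phase invariance kills the entries with unbalanced indices,
   [tperm k l] identifies the others, and what is left is
   2 alpha^2 beta^2 (c - x - y) = 0. *)
Lemma invariant_diag_entry :
  M (ix k k) (ix k k) = M (ix k l) (ix k l) + M (ix k l) (ix l k).
Proof.
have /esym := congr1 (fun X : 'M[C]_(D * D) => X (ix k k) (ix k k)) (M_inv rotmx_unitary).
rewrite /= twirl2E !rotmx_row_k !rotmx_row_kJ.
have M_kkkl : M (ix k k) (ix k l) = 0 by phase_neq1.
have M_kklk : M (ix k k) (ix l k) = 0 by phase_neq1.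
have M_kkll : M (ix k k) (ix l l) = 0 by phase_neq1.
have M_klkk : M (ix k l) (ix k k) = 0 by phase_neq1.
have M_klll : M (ix k l) (ix l l) = 0 by phase_neq1.
have M_lkkk : M (ix l k) (ix k k) = 0 by phase_neq1.
have M_lkll : M (ix l k) (ix l l) = 0 by phase_neq1.
have M_llkk : M (ix l l) (ix k k) = 0 by phase_neq1.
have M_llkl : M (ix l l) (ix k l) = 0 by phase_neq1.
have M_lllk : M (ix l l) (ix l k) = 0 by phase_neq1.
have M_llll : M (ix l l) (ix l l) = M (ix k k) (ix k k).
  by rewrite invariant_tperm tpermR.
have M_lklk : M (ix l k) (ix l k) = M (ix k l) (ix k l).
  by rewrite invariant_tperm tpermL tpermR.
have M_lkkl : M (ix l k) (ix k l) = M (ix k l) (ix l k).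
  by rewrite invariant_tperm tpermL tpermR.
rewrite M_kkkl M_kklk M_kkll M_klkk M_klll M_lkkk M_lkll M_llkk M_llkl M_lllk.
rewrite M_llll M_lklk M_lkkl.
set c := M (ix k k) (ix k k); set x := M (ix k l) (ix k l); set y := M (ix k l) (ix l k).
move/eqP; rewrite -subr_eq0 => /eqP h.
have : (288%:R / 625%:R : C) * (c - (x + y)) = 0 by rewrite -h /alpha /beta; field.
by move/eqP; rewrite mulf_eq0 mulf_eq0 invr_eq0 !pnatr_eq0 /= subr_eq0 => /eqP.
Qed.

End TwoIndices.

Lemma invariant_diag_sum :
  (D + 1)%:R * \sum_s M (ix s s) (ix s s) = \tr M + \tr (M *m swapmx C D).
Proof.
rewrite mxtrace_tensE mxtrace_mul_swapmx -big_split /= mulr_sumr.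
apply: eq_bigr => k _; rewrite -big_split /=.
have diag l : M (ix k l) (ix k l) + M (ix k l) (ix l k) =
    M (ix k k) (ix k k) + (l == k)%:R * M (ix k k) (ix k k).
  have [->|lk] := eqVneq l k; first by rewrite mul1r.
  by rewrite mul0r addr0 (@invariant_diag_entry k l) // eq_sym.
under eq_bigr do rewrite diag.
by rewrite big_split /= sum_deltar sumr_const card_ord natrD mulrDl mul1r mulr_natl.
Qed.

End InvariantTensor.

Section FunAlgebra.
Variables (R : realType) (S : Type) (Q : (S -> R) -> Prop).
Local Notation C := R[i].
Local Notation Re := (@complex.Re R).
Local Notation Im := (@complex.Im R).

(* Entries of [twirl2 U O] are polynomials in the real and imaginary parts of
   the entries of U, so any algebra of real functions containing the latter
   contains the former: this yields both bounded measurability and continuity. *)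
Record fun_algebra := FunAlgebra {
  fun_algebraD : forall f g, Q f -> Q g -> Q (fun s => f s + g s);
  fun_algebraM : forall f g, Q f -> Q g -> Q (fun s => f s * g s);
  fun_algebraN : forall f, Q f -> Q (fun s => - f s);
  fun_algebra_cst : forall c, Q (fun _ => c) }.

Definition complex_in (F : S -> C) := Q (fun s => Re (F s)) /\ Q (fun s => Im (F s)).

Definition mx_in p q (A : S -> 'M[C]_(p, q)) := forall i j, complex_in (fun s => A s i j).

Hypothesis hQ : fun_algebra.

Lemma complex_in_cst (c : C) : complex_in (fun _ => c).
Proof. by split; apply: (fun_algebra_cst hQ). Qed.

Lemma complex_inD F G : complex_in F -> complex_in G -> complex_in (fun s => F s + G s).
Proof.
move=> [F1 F2] [G1 G2]; split.
  by under boolp.eq_fun do rewrite cReD; apply: (fun_algebraD hQ).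
by under boolp.eq_fun do rewrite cImD; apply: (fun_algebraD hQ).
Qed.

Lemma complex_inM F G : complex_in F -> complex_in G -> complex_in (fun s => F s * G s).
Proof.
move=> [F1 F2] [G1 G2]; split.
  under boolp.eq_fun do rewrite cReM.
  by apply: (fun_algebraD hQ); [|apply: (fun_algebraN hQ)]; apply: (fun_algebraM hQ).
by under boolp.eq_fun do rewrite cImM; apply: (fun_algebraD hQ); apply: (fun_algebraM hQ).
Qed.

Lemma complex_inJ F : complex_in F -> complex_in (fun s => Num.conj (F s)).
Proof.
move=> [F1 F2]; split; first by under boolp.eq_fun do rewrite cReJ.
by under boolp.eq_fun do rewrite cImJ; apply: (fun_algebraN hQ).
Qed.

Lemma complex_in_sum I (r : seq I) (P : pred I) (F : I -> S -> C) :
  (forall i, complex_in (F i)) -> complex_in (fun s => \sum_(i <- r | P i) F i s).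
Proof.
move=> hF; elim: r => [|a r IH].
  by under boolp.eq_fun do rewrite big_nil; apply: complex_in_cst.
under boolp.eq_fun do rewrite big_cons; case: (P a) => //.
exact: complex_inD.
Qed.

Lemma mx_in_cst p q (A : 'M[C]_(p, q)) : mx_in (fun _ => A).
Proof. by move=> i j; apply: complex_in_cst. Qed.

Lemma mx_in_mul p q r (A : S -> 'M[C]_(p, q)) (B : S -> 'M[C]_(q, r)) :
  mx_in A -> mx_in B -> mx_in (fun s => A s *m B s).
Proof.
move=> hA hB i j; under boolp.eq_fun do rewrite mxE.
by apply: complex_in_sum => k; apply: complex_inM.
Qed.

Lemma mx_in_adj p q (A : S -> 'M[C]_(p, q)) : mx_in A -> mx_in (fun s => adj (A s)).
Proof. by move=> hA i j; under boolp.eq_fun do rewrite adjE; apply: complex_inJ. Qed.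

Lemma mx_in_tensmx m n p q (A : S -> 'M[C]_(m, n)) (B : S -> 'M[C]_(p, q)) :
  mx_in A -> mx_in B -> mx_in (fun s => tensmx (A s) (B s)).
Proof. by move=> hA hB i j; under boolp.eq_fun do rewrite mxE; apply: complex_inM. Qed.

Lemma mx_in_twirl2 D (A : S -> 'M[C]_D) (O : 'M[C]_(D * D)) :
  mx_in A -> mx_in (fun s => twirl2 (A s) O).
Proof.
move=> hA; apply: mx_in_mul; last by apply/mx_in_adj/mx_in_tensmx.
by apply: mx_in_mul; [apply: mx_in_tensmx | apply: mx_in_cst].
Qed.

End FunAlgebra.

Section Expectation.
Variables (R : realType) (d : measure_display) (T : measurableType d).
Variable P : probability T R.
Local Notation C := R[i].

Definition bounded_measurable (f : T -> R) :=
  measurable_fun setT f /\ exists K, forall w, `|f w| <= K.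

Lemma bounded_measurable_algebra : fun_algebra bounded_measurable.
Proof.
split.
- move=> f g [mf [K1 hf]] [mg [K2 hg]]; split; first exact: measurable_realfun.measurable_funD.
  by exists (K1 + K2) => w; apply: le_trans (ler_normD _ _) _; apply: lerD.
- move=> f g [mf [K1 hf]] [mg [K2 hg]]; split; first exact: measurable_realfun.measurable_funM.
  by exists (K1 * K2) => w; rewrite normrM; apply: ler_pM.
- move=> f [mf [K hf]]; split; first exact: measurable_realfun.measurable_funN.
  by exists K => w; rewrite normrN.
- by move=> c; split; [exact: measurable_cst | exists `|c|].
Qed.

Local Notation bm_complex := (complex_in bounded_measurable).
Local Notation bm_algebra := bounded_measurable_algebra.

Lemma bounded_measurable_integrable f :
  bounded_measurable f -> P.-integrable setT (EFin \o f).
Proof.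
move=> [mf [K hK]]; apply: measurable_bounded_integrable => //.
  by rewrite (le_lt_trans (probability_le1 P measurableT)) ?ltry.
exists K; split; first by rewrite num_real.
by move=> M KM x _ /=; apply: le_trans (hK x) (ltW KM).
Qed.

Lemma CED F G : bm_complex F -> bm_complex G ->
  CE P (fun w => F w + G w) = CE P F + CE P G.
Proof.
move=> [F1 F2] [G1 G2]; apply: complexP => /=.
  under eq_Rintegral do rewrite cReD.
  by rewrite RintegralD //; apply: bounded_measurable_integrable.
under eq_Rintegral do rewrite cImD.
by rewrite RintegralD //; apply: bounded_measurable_integrable.
Qed.

Lemma CEMl (c : C) F : bm_complex F -> CE P (fun w => c * F w) = c * CE P F.
Proof.
move=> [F1 F2]; have int_cst f x := bounded_measurable_integrable
  (fun_algebraM bm_algebra (fun_algebra_cst bm_algebra x) f).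
apply: complexP => /=.
  under eq_Rintegral do rewrite cReM.
  rewrite RintegralB ?int_cst // !RintegralZl //;
    by [rewrite cReM | apply: bounded_measurable_integrable].
under eq_Rintegral do rewrite cImM.
rewrite RintegralD ?int_cst // !RintegralZl //;
  by [rewrite cImM | apply: bounded_measurable_integrable].
Qed.

Lemma CE_cst (c : C) : CE P (fun _ => c) = c.
Proof.
have P1 : (P : measure T R) setT = 1%E by exact: probability_setT.
by apply: complexP; rewrite /= Rintegral_cst // P1 /= mulr1.
Qed.

Lemma CE_sum I (r : seq I) (Pr : pred I) (F : I -> T -> C) :
  (forall i, bm_complex (F i)) ->
  CE P (fun w => \sum_(i <- r | Pr i) F i w) = \sum_(i <- r | Pr i) CE P (F i).
Proof.
move=> hF; elim: r => [|a r IH].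
  by under boolp.eq_fun do rewrite big_nil; rewrite big_nil CE_cst.
under boolp.eq_fun do rewrite big_cons; rewrite big_cons; case: (Pr a) => //.
by rewrite CED ?IH //; apply: (complex_in_sum bm_algebra).
Qed.

End Expectation.

Lemma unitary_entry_bound (R : realType) D (U : 'M[R[i]]_D) a b :
  Defs.is_unitary U ->
  `|complex.Re (U a b)| <= 1 /\ `|complex.Im (U a b)| <= 1.
Proof.
move=> hU.
have row_norm : \sum_c (complex.Re (U a c) ^+ 2 + complex.Im (U a c) ^+ 2) = 1.
  have := congr1 (fun M : 'M[R[i]]_D => complex.Re (M a a)) hU.
  rewrite /= !mxE eqxx /= cRe_sum => <-; apply: eq_bigr => c _.
  by rewrite !mxE cReM cReJ cImJ !expr2; lra.
have : complex.Re (U a b) ^+ 2 + complex.Im (U a b) ^+ 2 <= 1.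
  rewrite -row_norm (bigD1 b) //= lerDl; apply: sumr_ge0 => c _.
  by rewrite addr_ge0 // sqr_ge0.
by split; rewrite ler_norml; apply/andP; split; nra.
Qed.

Section HaarTwirl.
Variables (R : realType) (d : measure_display) (T : measurableType d).
Variables (P : probability T R) (D : nat) (H : T -> 'M[R[i]]_D).
Hypothesis hH : is_haar P H.
Local Notation C := R[i].
Local Notation bm_complex := (complex_in (@bounded_measurable R d T)).
Local Notation bm_algebra := (@bounded_measurable_algebra R d T).

Lemma haar_unitary w : Defs.is_unitary (H w).
Proof. by case: hH => -[+ _] _; apply. Qed.

Lemma haar_bounded_measurable : mx_in (@bounded_measurable R d T) H.
Proof.
case: hH => -[_ hm] _ a b.
have bound w := unitary_entry_bound a b (haar_unitary w).
split; split; first exact: (hm a b).1.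
- by exists 1 => w; case: (bound w).
- exact: (hm a b).2.
- by exists 1 => w; case: (bound w).
Qed.

Lemma bm_twirl2 O x y : bm_complex (fun w => twirl2 (H w) O x y).
Proof. exact: (mx_in_twirl2 bm_algebra O haar_bounded_measurable). Qed.

Definition mx_of_parts (XY : 'M[R]_D * 'M[R]_D) : 'M[C]_D :=
  \matrix_(a, b) Complex (XY.1 a b) (XY.2 a b).

Lemma splitRIK (M : 'M[C]_D) : mx_of_parts (splitRI M) = M.
Proof. by apply/matrixP => a b; rewrite !mxE; case: (M a b). Qed.

Local Notation continuous_fun := (fun f : 'M[R]_D * 'M[R]_D -> R => continuous f).

Lemma continuous_algebra : fun_algebra continuous_fun.
Proof.
split.
- by move=> f g hf hg x; exact: continuousD (hf x) (hg x).
- by move=> f g hf hg x; exact: continuousM (hf x) (hg x).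
- by move=> f hf x; exact: continuousN (hf x).
- by move=> c x; exact: cst_continuous.
Qed.

Lemma continuous_mx_of_parts : mx_in continuous_fun mx_of_parts.
Proof.
move=> a b; split; under boolp.eq_fun do rewrite mxE /=; move=> x.
  apply: (continuous_comp (f := fst) (g := fun M : 'M[R]_D => M a b)).
    exact: cvg_fst.
  exact: coord_continuous.
apply: (continuous_comp (f := snd) (g := fun M : 'M[R]_D => M a b)).
  exact: cvg_snd.
exact: coord_continuous.
Qed.

Lemma CE_haar_mulmx (G : 'M[C]_D -> C) V : Defs.is_unitary V ->
  complex_in continuous_fun (fun XY => G (mx_of_parts XY)) ->
  CE P (fun w => G (V *m H w)) = CE P (fun w => G (H w)).
Proof.
move=> hV [G1 G2]; have [_ inv] := hH.
have -> : G = (fun M => G (mx_of_parts (splitRI M))).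
  by apply: boolp.funext => M; rewrite splitRIK.
by rewrite /CE (inv V hV _ G1) (inv V hV _ G2).
Qed.

Definition haar_twirl O : 'M[C]_(D * D) :=
  \matrix_(x, y) CE P (fun w => twirl2 (H w) O x y).

Lemma haar_twirl_invariant O V : Defs.is_unitary V ->
  twirl2 V (haar_twirl O) = haar_twirl O.
Proof.
move=> hV; set W := tensmx V V; apply/matrixP => x y.
rewrite [RHS]mxE -(@CE_haar_mulmx (fun M => twirl2 M O x y) _ hV); last first.
  exact: (mx_in_twirl2 continuous_algebra O continuous_mx_of_parts).
have bm_scaled c p q : bm_complex (fun w => c * twirl2 (H w) O p q).
  exact: (complex_inM bm_algebra (complex_in_cst bm_algebra c) (bm_twirl2 O p q)).
rewrite (_ : (fun w => twirl2 (V *m H w) O x y) =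
   (fun w => \sum_q \sum_p ((W x p * adj W q y) * twirl2 (H w) O p q))); last first.
  apply: boolp.funext => w; rewrite twirl2_mulmx -/W mxE; apply: eq_bigr => q _.
  by rewrite mxE mulr_suml; apply: eq_bigr => p _; rewrite mxE; ring.
rewrite CE_sum => [|q]; last exact: (complex_in_sum bm_algebra).
rewrite [in LHS]/twirl2 -/W mxE; apply: eq_bigr => q _.
rewrite CE_sum // mxE mulr_suml; apply: eq_bigr => p _.
by rewrite CEMl ?/haar_twirl ?mxE; [ring | exact: bm_twirl2].
Qed.

Lemma mxtrace_haar_twirl O : \tr (haar_twirl O) = \tr O.
Proof.
rewrite /mxtrace; under eq_bigr do rewrite mxE.
rewrite -CE_sum; last by move=> x; apply: bm_twirl2.
rewrite -[RHS](CE_cst P); congr (CE P _); apply: boolp.funext => w.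
exact: mxtrace_twirl2 O (haar_unitary w).
Qed.

Lemma mxtrace_haar_twirl_swapmx O :
  \tr (haar_twirl O *m swapmx C D) = \tr (O *m swapmx C D).
Proof.
transitivity (CE P (fun w => \sum_k \sum_l twirl2 (H w) O (ix k l) (ix l k))).
  rewrite mxtrace_mul_swapmx CE_sum => [|k]; last first.
    by apply: (complex_in_sum bm_algebra) => l; apply: bm_twirl2.
  apply: eq_bigr => k _; rewrite CE_sum => [|l]; last exact: bm_twirl2.
  by apply: eq_bigr => l _; rewrite mxE.
rewrite -[RHS](CE_cst P); congr (CE P _); apply: boolp.funext => w.
by rewrite -mxtrace_mul_swapmx (mxtrace_twirl2_swapmx O (haar_unitary w)).
Qed.

Lemma haar_diag_sum O :
  (D + 1)%:R * \sum_s CE P (fun w => twirl2 (H w) O (ix s s) (ix s s)) =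
  \tr O + \tr (O *m swapmx C D).
Proof.
rewrite -mxtrace_haar_twirl -mxtrace_haar_twirl_swapmx.
rewrite -(invariant_diag_sum (haar_twirl_invariant O)).
by congr (_ * _); apply: eq_bigr => s _; rewrite mxE.
Qed.

End HaarTwirl.

Section ComplexDerive.
Variables (R : realType) (m : nat) (x v : 'rV[R]_m).
Local Notation C := R[i].
Local Notation Re := (@complex.Re R).
Local Notation Im := (@complex.Im R).

Definition is_cderive (F : 'rV[R]_m -> C) (dF : C) :=
  is_derive x v (fun t => Re (F t)) (Re dF) /\
  is_derive x v (fun t => Im (F t)) (Im dF).

Lemma is_cderive_cst (c : C) : is_cderive (fun _ => c) 0.
Proof. by split; apply: is_derive_cst. Qed.

Lemma is_cderiveD F G dF dG : is_cderive F dF -> is_cderive G dG ->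
  is_cderive (fun t => F t + G t) (dF + dG).
Proof.
move=> [F1 F2] [G1 G2]; split.
  by under boolp.eq_fun do rewrite cReD; rewrite cReD; apply: is_deriveD.
by under boolp.eq_fun do rewrite cImD; rewrite cImD; apply: is_deriveD.
Qed.

Lemma is_cderiveM F G dF dG : is_cderive F dF -> is_cderive G dG ->
  is_cderive (fun t => F t * G t) (F x * dG + G x * dF).
Proof.
move=> [F1 F2] [G1 G2]; split.
  under boolp.eq_fun do rewrite cReM.
  apply: is_derive_eq (is_deriveB (is_deriveM F1 G1) (is_deriveM F2 G2)) _.
  by rewrite /GRing.scale /= cReD !cReM; ring.
under boolp.eq_fun do rewrite cImM.
apply: is_derive_eq (is_deriveD (is_deriveM F1 G2) (is_deriveM F2 G1)) _.
by rewrite /GRing.scale /= cImD !cImM; ring.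
Qed.

Lemma is_cderiveJ F dF : is_cderive F dF ->
  is_cderive (fun t => Num.conj (F t)) (Num.conj dF).
Proof.
move=> [F1 F2]; split; first by under boolp.eq_fun do rewrite cReJ; rewrite cReJ.
by under boolp.eq_fun do rewrite cImJ; rewrite cImJ; apply: is_deriveN.
Qed.

Lemma is_cderive_sum I (r : seq I) (P : pred I) (F : I -> 'rV[R]_m -> C) dF :
  (forall i, is_cderive (F i) (dF i)) ->
  is_cderive (fun t => \sum_(i <- r | P i) F i t) (\sum_(i <- r | P i) dF i).
Proof.
move=> hF; elim: r => [|a r IH].
  by under boolp.eq_fun do rewrite big_nil; rewrite big_nil; apply: is_cderive_cst.
under boolp.eq_fun do rewrite big_cons; rewrite big_cons; case: (P a) => //.
exact: is_cderiveD.
Qed.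

Lemma is_cderive_quadform D (phi : 'rV[R]_m -> 'cV[C]_D) (dphi : 'cV[C]_D) (M : 'M[C]_D) :
  (forall a, is_cderive (fun t => phi t a 0) (dphi a 0)) ->
  is_cderive (fun t => (adj (phi t) *m M *m phi t) 0 0)
             ((adj dphi *m M *m phi x + adj (phi x) *m M *m dphi) 0 0).
Proof.
move=> dphiP.
have -> : (fun t => (adj (phi t) *m M *m phi t) 0 0) =
    (fun t => \sum_b \sum_a Num.conj (phi t a 0) * M a b * phi t b 0).
  apply: boolp.funext => t; rewrite mxE; apply: eq_bigr => b _.
  by rewrite mxE mulr_suml; apply: eq_bigr => a _; rewrite adjE.
have -> : (adj dphi *m M *m phi x + adj (phi x) *m M *m dphi) 0 0 =
    \sum_b \sum_a (Num.conj (phi x a 0) * M a b * dphi b 0 +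
                   phi x b 0 * (Num.conj (phi x a 0) * 0 + M a b * Num.conj (dphi a 0))).
  rewrite !mxE -big_split /=; apply: eq_bigr => b _.
  rewrite !mxE !mulr_suml -big_split /=; apply: eq_bigr => a _.
  by rewrite ?mxE ?adjE; ring.
apply: is_cderive_sum => b; apply: is_cderive_sum => a.
exact: is_cderiveM (is_cderiveM (is_cderiveJ (dphiP a)) (is_cderive_cst _)) (dphiP b).
Qed.

End ComplexDerive.

Lemma mulmx_col_rowE (K : pzSemiRingType) m n (A : 'M[K]_(m, 1)) (B : 'M[K]_(1, n)) i j :
  (A *m B) i j = A i 0 * B 0 j.
Proof. by rewrite mxE big_ord1. Qed.

Section FisherAlgebra.
Variables (R : realType) (D : nat).
Local Notation C := R[i].
Local Notation Re := (@complex.Re R).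

Lemma quadform_proj (U : 'M[C]_D) s (x y : 'cV[C]_D) :
  (adj x *m (adj U *m delta_mx s s *m U) *m y) 0 0 =
  Num.conj ((U *m x) s 0) * (U *m y) s 0.
Proof.
rewrite !mulmxA -adjM -!mulmxA mxE (bigD1 s) //= big1 ?addr0; last first.
  move=> a /negbTE sa; rewrite [(delta_mx _ _ *m _) _ _]mxE big1 ?mulr0 // => b _.
  by rewrite mxE sa mul0r.
rewrite adjE [(delta_mx _ _ *m _) _ _]mxE (bigD1 s) //= big1 ?addr0; last first.
  by move=> b /negbTE bs; rewrite mxE bs andbF mul0r.
by rewrite [delta_mx _ _ _ _]mxE !eqxx mul1r.
Qed.

Lemma twirl2D (U : 'M[C]_D) O1 O2 : twirl2 U (O1 + O2) = twirl2 U O1 + twirl2 U O2.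
Proof. by rewrite /twirl2 mulmxDr mulmxDl. Qed.

Lemma twirl2Z (U : 'M[C]_D) c O : twirl2 U (c *: O) = c *: twirl2 U O.
Proof. by rewrite /twirl2 -scalemxAr -scalemxAl. Qed.

Lemma twirl2_tensmx_rank1 (U : 'M[C]_D) (a b c e : 'cV[C]_D) s :
  twirl2 U (tensmx (a *m adj b) (c *m adj e)) (ix s s) (ix s s) =
  (U *m a) s 0 * Num.conj ((U *m b) s 0) * ((U *m c) s 0 * Num.conj ((U *m e) s 0)).
Proof.
have rank1 (x y : 'cV[C]_D) : (U *m (x *m adj y) *m adj U) s s =
    (U *m x) s 0 * Num.conj ((U *m y) s 0).
  by rewrite mulmxA -mulmxA -adjM mulmx_col_rowE adjE.
by rewrite /twirl2 adj_tensmx !mxtens.tensmx_mul mxtens.tensmxE !rank1.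
Qed.

Lemma mxtrace_rank1 (x y : 'cV[C]_D) : \tr (x *m adj y) = (adj y *m x) 0 0.
Proof. by rewrite mxtrace_mulC /mxtrace big_ord1. Qed.

Lemma mxtrace_rank1_mul (x y z w : 'cV[C]_D) :
  \tr (x *m adj y *m (z *m adj w)) = (adj y *m z) 0 0 * (adj w *m x) 0 0.
Proof.
rewrite -mulmxA mxtrace_mulC /mxtrace big_ord1 !mulmxA.
by rewrite -(mulmxA (adj y *m z)) mulmx_col_rowE.
Qed.

Definition fisher_obs (psi u v : 'cV[C]_D) : 'M[C]_(D * D) :=
  2%:R *: (tensmx (u *m adj psi) (v *m adj psi) + tensmx (u *m adj psi) (psi *m adj v)).

Lemma twirl2_fisher_obs (U : 'M[C]_D) psi u v s :
  let d x := Re (Num.conj ((U *m x) s 0) * (U *m psi) s 0 +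
                 Num.conj ((U *m psi) s 0) * (U *m x) s 0) in
  d u * d v = Re (twirl2 U (fisher_obs psi u v) (ix s s) (ix s s)).
Proof.
rewrite /= twirl2Z twirl2D [in RHS]mxE [in RHS]mxE !twirl2_tensmx_rank1.
move: ((U *m u) s 0) ((U *m v) s 0) ((U *m psi) s 0) => a b c.
by rewrite cRe_natrM !(cReM, cImM, cReD, cImD, cReJ, cImJ); ring.
Qed.

Lemma mxtrace_fisher_obs (psi u v : 'cV[C]_D) :
  (adj psi *m psi) 0 0 = 1 ->
  Re ((adj psi *m u) 0 0) = 0 -> Re ((adj psi *m v) 0 0) = 0 ->
  4 * Re ((adj u *m v) 0 0 - (adj u *m psi *m adj psi *m v) 0 0) =
  2 * Re (\tr (fisher_obs psi u v) + \tr (fisher_obs psi u v *m swapmx C D)).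
Proof.
move=> psi1 Ru Rv; rewrite mxtraceZ mxtraceD !mxtrace_tensmx !mxtrace_rank1.
rewrite -scalemxAl mulmxDl mxtraceZ mxtraceD !mxtrace_tensmx_swapmx.
rewrite !mxtrace_rank1_mul psi1 mul1r -(mulmxA (adj u *m psi)) mulmx_col_rowE.
rewrite (adj_dot u psi) (adj_dot v psi) (adj_dot v u).
move: Ru Rv; move: ((adj psi *m u) 0 0) ((adj psi *m v) 0 0) ((adj u *m v) 0 0).
move=> a b c Ra Rb; rewrite -mulrDr cRe_natrM.
by rewrite !(cReM, cImM, cReD, cImD, cReJ, cImJ, cReN) Ra Rb; ring.
Qed.

End FisherAlgebra.

Section ParametrizedState.
Variables (R : realType) (m D : nat) (phi : 'rV[R]_m -> 'cV[R[i]]_D).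
Hypothesis phi_smooth : smooth_state phi.
Variable theta : 'rV[R]_m.
Local Notation Re := (@complex.Re R).

Lemma is_cderive_dstate (i : 'I_m) a :
  is_cderive theta (delta_mx 0 i) (fun t => phi t a 0) (dstate i phi theta a 0).
Proof.
have dRe := diff_derivable (v := delta_mx 0 i) ((phi_smooth a).1 [::] theta).
have dIm := diff_derivable (v := delta_mx 0 i) ((phi_smooth a).2 [::] theta).
by split; rewrite mxE; apply/derivableP.
Qed.

Lemma pd_quadform (i : 'I_m) (M : 'M[R[i]]_D) :
  pd i (fun t => Re ((adj (phi t) *m M *m phi t) 0 0)) theta =
  Re ((adj (dstate i phi theta) *m M *m phi theta +
       adj (phi theta) *m M *m dstate i phi theta) 0 0).
Proof.
by rewrite /pd; have [[_ ->] _] := is_cderive_quadform M (is_cderive_dstate i).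
Qed.

Lemma pd_pU (i : 'I_m) (U : 'M[R[i]]_D) s :
  pd i (pU s U phi) theta =
  Re (Num.conj ((U *m dstate i phi theta) s 0) * (U *m phi theta) s 0 +
      Num.conj ((U *m phi theta) s 0) * (U *m dstate i phi theta) s 0).
Proof.
have -> : pU s U phi =
    (fun t => Re ((adj (phi t) *m (adj U *m delta_mx s s *m U) *m phi t) 0 0)).
  by apply: boolp.funext => t; rewrite /pU !mulmxA.
by rewrite pd_quadform mxE !quadform_proj.
Qed.

Hypothesis phi_normed : forall t, adj (phi t) *m phi t = 1%:M.

Lemma Re_dot_dstate (i : 'I_m) :
  Re ((adj (phi theta) *m dstate i phi theta) 0 0) = 0.
Proof.
have [[_ dnorm] _] := is_cderive_quadform 1%:M (is_cderive_dstate i).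
move: dnorm; under boolp.eq_fun do rewrite mulmx1 phi_normed mxE /=.
rewrite derive_cst !mulmx1 mxE cReD [(adj (dstate _ _ _) *m _) 0 0]adj_dot cReJ.
by move=> ?; lra.
Qed.

End ParametrizedState.

Unset Implicit Arguments.

Theorem corollary1 (R : realType) (n m : nat) (hn : (0 < n)%N)
  (phi : 'rV[R]_m -> 'cV[R[i]]_(2 ^ n))
  (hsmooth : smooth_state phi)
  (hnorm : forall theta : 'rV[R]_m, adj (phi theta) *m phi theta = 1%:M)
  (d : measure_display) (T : measurableType d) (P : probability T R)
  (U : T -> 'M[R[i]]_(2 ^ n))
  (hdesign : is_2design P U)
  (theta : 'rV[R]_m) (i j : 'I_m) :
  QFI phi theta i j
  = 2 * (2 ^ n + 1)%:R *
    \sum_(s < 2 ^ n)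
      \int[P]_w (pd i (pU s (U w) phi) theta * pd j (pU s (U w) phi) theta).
Proof.
case: hdesign => _ [d' [T' [P' [H [hH twirl_eq]]]]].
set O := fisher_obs (phi theta) (dstate i phi theta) (dstate j phi theta).
have -> : \sum_(s < 2 ^ n)
      \int[P]_w (pd i (pU s (U w) phi) theta * pd j (pU s (U w) phi) theta) =
    complex.Re (\sum_s CE P' (fun w => twirl2 (H w) O (ix s s) (ix s s))).
  rewrite cRe_sum; apply: eq_bigr => s _; rewrite -twirl_eq /=.
  by apply: eq_Rintegral => w _; rewrite !pd_pU // twirl2_fisher_obs.
rewrite -mulrA -cRe_natrM haar_diag_sum //.
apply: mxtrace_fisher_obs; rewrite ?Re_dot_dstate //.
by rewrite hnorm mxE.
Qed.
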